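(* Let $X\subset[0,1]$ with a $\sigma$-algebra $\mathcal F$ containing the Borel subsets of $X$, let $\mu\colon\mathcal F\to[0,1]$ be a monotone measure, let $A\in\mathcal F$, and let $f\colon X\to[0,1]$ be a non-decreasing measurable function. Writing $N(\phi)=\sup_{\alpha\in[0,1]}\alpha\,\mu(A\cap\{\phi\ge\alpha\})$ for the Shilkret integral of a measurable $\phi\colon X\to[0,1]$ over $A$, and $K=\mu(A)\cdot N(x)$ (where $N(x)$ is the Shilkret integral of the identity function $x\mapsto x$), if $K>0$ then $$N(f)\le \frac{1}{\sqrt K}\,\big(N(f^2)\big)^{1/4}\big(N(x^2f^2)\big)^{1/4}.$$
   Context: A monotone measure is a map $\mu$ on $\mathcal F$ with $\mu(\emptyset)=0$, $\mu(X)>0$ and $\mu(A)\le\mu(B)$ whenever $A\subset B$. Here $\{\phi\ge\alpha\}=\{x\in X:\phi(x)\ge\alpha\}$, and $x^2f^2$ denotes the function $x\mapsto x^2 f(x)^2$. *)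

From Stdlib Require Import Reals Lra ClassicalEpsilon.
Open Scope R_scope.

Definition sigma_algebra (X : R -> Prop) (F : (R -> Prop) -> Prop) : Prop :=
  (forall S, F S -> forall x, S x -> X x) /\
  F X /\
  (forall S, F S -> F (fun x => X x /\ ~ S x)) /\
  (forall Sn : nat -> R -> Prop, (forall n, F (Sn n)) -> F (fun x => exists n, Sn n x)).

Inductive borel : (R -> Prop) -> Prop :=
| borel_ge (a : R) : borel (fun x => a <= x)
| borel_compl (S : R -> Prop) : borel S -> borel (fun x => ~ S x)
| borel_union (Sn : nat -> R -> Prop) :
    (forall n, borel (Sn n)) -> borel (fun x => exists n, Sn n x).

Definition monotone_measure (X : R -> Prop) (F : (R -> Prop) -> Prop)
    (mu : (R -> Prop) -> R) : Prop :=
  (forall S, F S -> 0 <= mu S <= 1) /\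
  mu (fun _ => False) = 0 /\
  0 < mu X /\
  (forall S T, F S -> F T -> (forall x, S x -> T x) -> mu S <= mu T).

Definition measurable (X : R -> Prop) (F : (R -> Prop) -> Prop) (phi : R -> R) : Prop :=
  forall B, borel B -> F (fun x => X x /\ B (phi x)).

Definition shilkret_set (mu : (R -> Prop) -> R) (A : R -> Prop) (phi : R -> R) (y : R) : Prop :=
  exists a, 0 <= a <= 1 /\ y = a * mu (fun x => A x /\ a <= phi x).

Definition shilkret (mu : (R -> Prop) -> R) (A : R -> Prop) (phi : R -> R) : R :=
  epsilon (inhabits 0) (fun s => is_lub (shilkret_set mu A phi) s).

From Stdlib Require Import Reals Lra Classical ClassicalEpsilon FunctionalExtensionality PropExtensionality.
Open Scope R_scope.

(* Fix a level [a] and put [m = mu (A ∩ {f >= a})].  As [{f >= a}] lies in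
   [{f^2 >= a^2}], [N(f^2) >= a^2 m].  As [f] is nondecreasing, for every [b]
   either [{f >= a}] lies in [{x >= b}], or some [u < b] has [f u >= a] and then
   [f >= a] on all of [{x >= b}]; either way [A ∩ {x^2 f^2 >= a^2 b^2}] has measure
   at least [m * mu (A ∩ {x >= b})], and taking the supremum over [b] gives
   [N(x^2 f^2) >= a^2 m N(x)^2].  Hence [N(f^2) N(x^2 f^2) >= a^4 m^2 N(x)^2
   >= (a m)^4 K^2] since [m, mu A <= 1]; take fourth roots and the supremum over [a]. *)

Lemma pred_ext (P Q : R -> Prop) : (forall x, P x <-> Q x) -> P = Q.
Proof.
  intros H; apply functional_extensionality; intro x.
  apply propositional_extensionality; auto.
Qed.

Lemma borel_gt (c : R) : borel (fun x => c < x).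
Proof.
  replace (fun x => c < x) with (fun x => exists n : nat, c + / (INR n + 1) <= x).
  { apply borel_union; intro n; apply borel_ge. }
  apply pred_ext; intro x; split.
  - intros [n Hn].
    assert (0 < / (INR n + 1)) by (apply Rinv_0_lt_compat; pose proof (pos_INR n); lra).
    lra.
  - intros Hcx.
    destruct (archimed_cor1 (x - c)) as [N [HN HN0]]; [lra|].
    exists N.
    assert (0 < INR N) by (apply lt_0_INR; auto).
    assert (/ (INR N + 1) <= / INR N) by (apply Rinv_le_contravar; lra).
    lra.
Qed.

Lemma sigma_algebra_inter (X : R -> Prop) (F : (R -> Prop) -> Prop) (S T : R -> Prop) :
  sigma_algebra X F -> F S -> F T -> F (fun x => S x /\ T x).
Proof.
  intros [Hsub [_ [Hcompl Hunion]]] HS HT.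
  set (Sn := fun n : nat => match n with
                            | O => fun x => X x /\ ~ S x
                            | _ => fun x => X x /\ ~ T x end).
  replace (fun x => S x /\ T x) with (fun x => X x /\ ~ (exists n, Sn n x)).
  { apply Hcompl, Hunion. intros [|n]; apply Hcompl; assumption. }
  apply pred_ext; intro x; split.
  - intros [Xx Hn]; split; apply NNPP; intro H; apply Hn.
    + exists O; simpl; auto.
    + exists 1%nat; simpl; auto.
  - intros [Sx Tx]; split; [eapply Hsub; eauto|].
    intros [[|n] Hn]; simpl in Hn; tauto.
Qed.

Section UpperSets.

Variables (X : R -> Prop) (F : (R -> Prop) -> Prop) (lb : R).
Hypothesis HXlb : forall x, X x -> lb <= x.
Hypothesis HB : forall B, borel B -> F (fun x => X x /\ B x).

Lemma upper_set_inf (U : R -> Prop) :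
  (forall x, U x -> X x) ->
  (forall x y, U x -> X y -> x <= y -> U y) ->
  (exists u, U u) ->
  exists c, (forall u, U u -> c <= u) /\ (forall x, X x -> c < x -> U x).
Proof.
  intros HUX Hup [u0 Hu0].
  set (E := fun y => forall u, U u -> y <= u).
  destruct (completeness E) as [c [Hc_ub Hc_least]].
  - exists u0; intros y Hy; apply Hy, Hu0.
  - exists lb; intros u Hu; apply HXlb, HUX, Hu.
  - exists c; split.
    + intros u Hu; apply Hc_least; intros y Hy; apply Hy, Hu.
    + intros x Xx Hcx. apply NNPP; intro HnU.
      assert (E x).
      { intros u Hu. destruct (Rle_lt_dec x u) as [|Hux]; auto.
        exfalso; apply HnU; apply (Hup u); auto; lra. }
      specialize (Hc_ub x H); lra.
Qed.

Lemma upper_set_measurable (U : R -> Prop) :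
  (forall x, U x -> X x) ->
  (forall x y, U x -> X y -> x <= y -> U y) ->
  F U.
Proof.
  intros HUX Hup.
  enough (HBU : exists B, borel B /\ forall x, U x <-> X x /\ B x).
  { destruct HBU as [B [HBor HUB]]. rewrite (pred_ext _ _ HUB). apply HB, HBor. }
  destruct (classic (exists u, U u)) as [Hne|Hempty].
  - destruct (upper_set_inf U HUX Hup Hne) as [c [Hc_lb Hc_gt]].
    destruct (classic (U c)) as [Uc|nUc].
    + exists (fun x => c <= x); split; [apply borel_ge|].
      intro x; split.
      * intros Ux; split; auto.
      * intros [Xx Hcx]; apply (Hup c); auto.
    + exists (fun x => c < x); split; [apply borel_gt|].
      intro x; split.
      * intros Ux; split; auto.
        destruct (Rle_lt_or_eq_dec c x (Hc_lb x Ux)) as [|<-]; tauto.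
      * intros [Xx Hcx]; auto.
  - exists (fun x => ~ lb <= x); split; [apply borel_compl, borel_ge|].
    intro x; split.
    + intros Ux; exfalso; apply Hempty; eauto.
    + intros [Xx Hx]; exfalso; apply Hx, HXlb, Xx.
Qed.

End UpperSets.

Definition nondecreasing_on (X : R -> Prop) (g : R -> R) : Prop :=
  forall x y, X x -> X y -> x <= y -> g x <= g y.

Definition level (A : R -> Prop) (phi : R -> R) (a : R) : R -> Prop :=
  fun x => A x /\ a <= phi x.

Lemma le_sqrt_of_sq_le (y z : R) : 0 <= y -> y ^ 2 <= z -> y <= sqrt z.
Proof. intros Hy Hyz. rewrite <- (sqrt_pow2 y Hy). apply sqrt_le_1_alt, Hyz. Qed.

Lemma le_sqrt_sqrt_mul (t p q : R) :
  0 <= t -> 0 <= p -> 0 <= q -> t ^ 4 <= p * q ->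
  t <= sqrt (sqrt p) * sqrt (sqrt q).
Proof.
  intros Ht Hp Hq Ht4.
  rewrite <- sqrt_mult, <- sqrt_mult by (try apply sqrt_pos; assumption).
  apply le_sqrt_of_sq_le; [assumption|].
  apply le_sqrt_of_sq_le; [nra|].
  replace ((t ^ 2) ^ 2) with (t ^ 4) by ring. assumption.
Qed.

Section Shilkret.

Variables (X : R -> Prop) (F : (R -> Prop) -> Prop) (mu : (R -> Prop) -> R) (A : R -> Prop).
Hypothesis HX01 : forall x, X x -> 0 <= x <= 1.
Hypothesis HF : sigma_algebra X F.
Hypothesis HB : forall B, borel B -> F (fun x => X x /\ B x).
Hypothesis Hmu01 : forall S, F S -> 0 <= mu S <= 1.
Hypothesis Hmu_mono : forall S T, F S -> F T -> (forall x, S x -> T x) -> mu S <= mu T.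
Hypothesis HA : F A.

Lemma A_sub_X x : A x -> X x.
Proof. destruct HF as [Hsub _]; eauto. Qed.

Lemma level_measurable (g : R -> R) (a : R) :
  nondecreasing_on X g -> F (level A g a).
Proof.
  intros Hg.
  replace (level A g a) with (fun x => A x /\ (fun x => X x /\ a <= g x) x).
  - apply (sigma_algebra_inter X); auto.
    apply (upper_set_measurable X F 0); [intros x Xx; apply HX01, Xx|exact HB|tauto|].
    intros x y [Xx Hx] Xy Hxy; split; auto. apply Rle_trans with (g x); auto.
  - apply pred_ext; intro x; unfold level; split; [tauto|].
    intros [Ax Hx]; repeat split; auto. apply A_sub_X, Ax.
Qed.

Lemma mu_level01 (g : R -> R) (a : R) :
  nondecreasing_on X g -> 0 <= mu (level A g a) <= 1.
Proof. intros Hg; apply Hmu01, level_measurable, Hg. Qed.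

Lemma shilkret_is_lub (g : R -> R) :
  nondecreasing_on X g -> is_lub (shilkret_set mu A g) (shilkret mu A g).
Proof.
  intros Hg. unfold shilkret. apply epsilon_spec.
  destruct (completeness (shilkret_set mu A g)) as [s Hs]; [| |exists s; exact Hs].
  - exists 1. intros y [a [Ha ->]].
    pose proof (mu_level01 g a Hg). unfold level in *. nra.
  - exists 0, 0. split; [lra|ring].
Qed.

Lemma shilkret_ge (g : R -> R) (a : R) :
  nondecreasing_on X g -> 0 <= a <= 1 -> a * mu (level A g a) <= shilkret mu A g.
Proof. intros Hg Ha. apply (shilkret_is_lub g Hg). exists a; split; auto. Qed.

Lemma shilkret_nonneg (g : R -> R) : nondecreasing_on X g -> 0 <= shilkret mu A g.
Proof.
  intros Hg. apply Rle_trans with (0 * mu (level A g 0)); [lra|].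
  apply shilkret_ge; [exact Hg|lra].
Qed.

Lemma shilkret_le (g : R -> R) (c : R) :
  nondecreasing_on X g ->
  (forall a, 0 <= a <= 1 -> a * mu (level A g a) <= c) -> shilkret mu A g <= c.
Proof. intros Hg Hc. apply (shilkret_is_lub g Hg). intros y [a [Ha ->]]. apply Hc, Ha. Qed.

Variable f : R -> R.
Hypothesis Hf01 : forall x, X x -> 0 <= f x <= 1.
Hypothesis Hf_mono : nondecreasing_on X f.

Lemma nondecreasing_id : nondecreasing_on X (fun x => x).
Proof. intros x y _ _ Hxy; exact Hxy. Qed.

Lemma nondecreasing_fsq : nondecreasing_on X (fun x => f x ^ 2).
Proof.
  intros x y Xx Xy Hxy.
  pose proof (Hf01 x Xx). pose proof (Hf_mono x y Xx Xy Hxy). nra.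
Qed.

Lemma nondecreasing_xsq_fsq : nondecreasing_on X (fun x => x ^ 2 * f x ^ 2).
Proof.
  intros x y Xx Xy Hxy.
  pose proof (Hf01 x Xx). pose proof (HX01 x Xx). pose proof (Hf_mono x y Xx Xy Hxy).
  assert (x * f x <= y * f y) by nra.
  assert (0 <= x * f x) by nra.
  nra.
Qed.

Lemma shilkret_fsq_ge (a : R) :
  0 <= a <= 1 -> a ^ 2 * mu (level A f a) <= shilkret mu A (fun x => f x ^ 2).
Proof.
  intros Ha.
  apply Rle_trans with (a ^ 2 * mu (level A (fun x => f x ^ 2) (a ^ 2))).
  - apply Rmult_le_compat_l; [nra|].
    apply Hmu_mono; try apply level_measurable; auto using nondecreasing_fsq.
    intros x [Ax Hx]; split; auto.
    pose proof (Hf01 x (A_sub_X x Ax)). nra.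
  - apply shilkret_ge; [apply nondecreasing_fsq|nra].
Qed.

Lemma mu_level_mul_le (a b : R) :
  0 <= a -> 0 <= b ->
  mu (level A f a) * mu (level A (fun x => x) b)
  <= mu (level A (fun x => x ^ 2 * f x ^ 2) (a ^ 2 * b ^ 2)).
Proof.
  intros Ha Hb.
  pose proof (mu_level01 f a Hf_mono) as Hm.
  pose proof (mu_level01 _ b nondecreasing_id) as Hn.
  assert (Hxf : forall x, A x -> a <= f x -> b <= x -> a ^ 2 * b ^ 2 <= x ^ 2 * f x ^ 2).
  { intros x Ax Hax Hbx. pose proof (Hf01 x (A_sub_X x Ax)).
    assert (a * b <= x * f x) by (rewrite (Rmult_comm x); apply Rmult_le_compat; lra).
    assert (0 <= a * b) by nra.
    nra. }
  assert (HT : forall S, F S -> (forall x, S x -> level A (fun x => x ^ 2 * f x ^ 2) (a ^ 2 * b ^ 2) x) ->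
                 mu S <= mu (level A (fun x => x ^ 2 * f x ^ 2) (a ^ 2 * b ^ 2))).
  { intros S HS HST. apply Hmu_mono; auto. apply level_measurable, nondecreasing_xsq_fsq. }
  destruct (classic (forall x, level A f a x -> b <= x)) as [Hsub|Hnsub].
  - assert (mu (level A f a) <= mu (level A (fun x => x ^ 2 * f x ^ 2) (a ^ 2 * b ^ 2))).
    { apply HT; [apply level_measurable, Hf_mono|].
      intros x [Ax Hx]; split; auto. apply Hxf; auto. apply Hsub; split; auto. }
    nra.
  - apply not_all_ex_not in Hnsub. destruct Hnsub as [u Hu].
    apply imply_to_and in Hu. destruct Hu as [[Au Hau] Hbu].
    assert (mu (level A (fun x => x) b) <= mu (level A (fun x => x ^ 2 * f x ^ 2) (a ^ 2 * b ^ 2))).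
    { apply HT; [apply level_measurable, nondecreasing_id|].
      intros x [Ax Hx]; split; auto. apply Hxf; auto.
      apply Rle_trans with (f u); auto. apply Hf_mono; auto using A_sub_X; lra. }
    nra.
Qed.

Lemma shilkret_xsq_fsq_ge (a : R) :
  0 <= a <= 1 ->
  a ^ 2 * mu (level A f a) * shilkret mu A (fun x => x) ^ 2
  <= shilkret mu A (fun x => x ^ 2 * f x ^ 2).
Proof.
  intros Ha.
  set (c := a ^ 2 * mu (level A f a)).
  set (P := shilkret mu A (fun x => x ^ 2 * f x ^ 2)).
  assert (Hc : 0 <= c) by (pose proof (mu_level01 f a Hf_mono); unfold c; nra).
  assert (Hb : forall b, 0 <= b <= 1 -> c * (b * mu (level A (fun x => x) b)) ^ 2 <= P).
  { intros b Hb01.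
    pose proof (mu_level01 _ b nondecreasing_id).
    pose proof (mu_level01 f a Hf_mono).
    pose proof (mu_level_mul_le a b (proj1 Ha) (proj1 Hb01)).
    apply Rle_trans with (a ^ 2 * b ^ 2 * mu (level A (fun x => x ^ 2 * f x ^ 2) (a ^ 2 * b ^ 2))).
    - set (m := mu (level A f a)) in *. set (n := mu (level A (fun x => x) b)) in *.
      set (T := mu (level A (fun x => x ^ 2 * f x ^ 2) (a ^ 2 * b ^ 2))) in *.
      assert (Hab : 0 <= a ^ 2 * b ^ 2) by nra.
      assert (Hmn : 0 <= m * n) by nra.
      replace (c * (b * n) ^ 2) with (a ^ 2 * b ^ 2 * (m * n) * n) by (unfold c; ring).
      apply Rle_trans with (a ^ 2 * b ^ 2 * (m * n)).
      + assert (0 <= a ^ 2 * b ^ 2 * (m * n)) by nra. nra.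
      + apply Rmult_le_compat_l; assumption.
    - apply shilkret_ge; [apply nondecreasing_xsq_fsq|]. split; [nra|].
      assert (a ^ 2 <= 1) by nra. assert (b ^ 2 <= 1) by nra. nra. }
  destruct (Req_dec c 0) as [Hc0|Hc0].
  - rewrite Hc0. pose proof (shilkret_nonneg _ nondecreasing_xsq_fsq) as HP. fold P in HP. lra.
  - assert (Hcpos : 0 < c) by lra.
    assert (HN : shilkret mu A (fun x => x) <= sqrt (P / c)).
    { apply shilkret_le; [apply nondecreasing_id|]. intros b Hb01.
      pose proof (mu_level01 _ b nondecreasing_id).
      apply le_sqrt_of_sq_le; [nra|].
      apply Rmult_le_reg_l with c; [exact Hcpos|].
      replace (c * (P / c)) with P by (field; lra). apply Hb, Hb01. }
    pose proof (shilkret_nonneg _ nondecreasing_id).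
    assert (HP : 0 <= P / c).
    { pose proof (shilkret_nonneg _ nondecreasing_xsq_fsq).
      apply Rmult_le_pos; [assumption|apply Rlt_le, Rinv_0_lt_compat, Hcpos]. }
    pose proof (sqrt_sqrt _ HP).
    assert (shilkret mu A (fun x => x) ^ 2 <= P / c) by nra.
    apply Rmult_le_reg_l with (/ c); [apply Rinv_0_lt_compat, Hcpos|].
    replace (/ c * (c * shilkret mu A (fun x => x) ^ 2)) with (shilkret mu A (fun x => x) ^ 2)
      by (field; lra).
    replace (/ c * P) with (P / c) by (unfold Rdiv; ring). assumption.
Qed.

Lemma level_le_bound (a : R) :
  0 < mu A * shilkret mu A (fun x => x) -> 0 <= a <= 1 ->
  a * mu (level A f a) <=
    / sqrt (mu A * shilkret mu A (fun x => x))
    * sqrt (sqrt (shilkret mu A (fun x => f x ^ 2)))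
    * sqrt (sqrt (shilkret mu A (fun x => x ^ 2 * f x ^ 2))).
Proof.
  intros HK Ha.
  pose proof (shilkret_fsq_ge a Ha) as H1.
  pose proof (shilkret_xsq_fsq_ge a Ha) as H2.
  pose proof (shilkret_nonneg _ nondecreasing_id) as HNx.
  pose proof (shilkret_nonneg _ nondecreasing_fsq) as HP1.
  pose proof (shilkret_nonneg _ nondecreasing_xsq_fsq) as HP2.
  pose proof (mu_level01 f a Hf_mono) as Hm.
  pose proof (Hmu01 A HA) as HmA.
  set (m := mu (level A f a)) in *.
  set (Nx := shilkret mu A (fun x => x)) in *.
  set (P1 := shilkret mu A (fun x => f x ^ 2)) in *.
  set (P2 := shilkret mu A (fun x => x ^ 2 * f x ^ 2)) in *.
  set (r := sqrt (mu A * Nx)).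
  assert (Hr : 0 < r) by (apply sqrt_lt_R0, HK).
  assert (Hr2 : r * r = mu A * Nx) by (apply sqrt_sqrt; lra).
  assert (Ht4 : (a * m * r) ^ 4 <= P1 * P2).
  { assert (Ha2m : 0 <= a ^ 2 * m) by nra.
    assert (Hprod : (a ^ 2 * m) * (a ^ 2 * m * Nx ^ 2) <= P1 * P2)
      by (apply Rmult_le_compat; nra).
    assert (HmmA : m ^ 2 * mu A ^ 2 <= 1) by (assert (m ^ 2 <= 1) by nra; assert (mu A ^ 2 <= 1) by nra; nra).
    assert (Hbase : 0 <= a ^ 4 * m ^ 2 * Nx ^ 2) by (assert (0 <= a ^ 4) by nra; nra).
    replace ((a * m * r) ^ 4) with ((a ^ 4 * m ^ 2 * Nx ^ 2) * (m ^ 2 * mu A ^ 2))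
      by (replace ((a * m * r) ^ 4) with (a ^ 4 * m ^ 4 * ((r * r) * (r * r))) by ring;
          rewrite Hr2; ring).
    nra. }
  assert (Hkey : a * m * r <= sqrt (sqrt P1) * sqrt (sqrt P2))
    by (apply le_sqrt_sqrt_mul; auto; repeat apply Rmult_le_pos; lra).
  apply Rmult_le_reg_l with r; [exact Hr|].
  replace (r * (/ r * sqrt (sqrt P1) * sqrt (sqrt P2))) with (sqrt (sqrt P1) * sqrt (sqrt P2))
    by (field; lra).
  lra.
Qed.

End Shilkret.

Theorem mainTheorem2 (X : R -> Prop) (F : (R -> Prop) -> Prop)
  (mu : (R -> Prop) -> R) (A : R -> Prop) (f : R -> R) :
  (forall x, X x -> 0 <= x <= 1) ->
  sigma_algebra X F ->
  (forall B, borel B -> F (fun x => X x /\ B x)) ->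
  monotone_measure X F mu ->
  F A ->
  (forall x, X x -> 0 <= f x <= 1) ->
  (forall x y, X x -> X y -> x <= y -> f x <= f y) ->
  measurable X F f ->
  0 < mu A * shilkret mu A (fun x => x) ->
  shilkret mu A f <=
    / sqrt (mu A * shilkret mu A (fun x => x))
    * sqrt (sqrt (shilkret mu A (fun x => f x ^ 2)))
    * sqrt (sqrt (shilkret mu A (fun x => x ^ 2 * f x ^ 2))).
Proof.
  intros HX01 HF HB [Hmu01 [_ [_ Hmu_mono]]] HA Hf01 Hf_mono _ HK.
  apply (shilkret_le X F mu A); auto.
  intros a Ha. apply (level_le_bound X F); auto.
Qed.
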